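(* Let $A$ be a finite skew brace and $k$ a field of prime characteristic $p$. Then $|A|$ is a power of $p$ if and only if, up to equivalence, the only irreducible representation of $A$ over $k$ is the trivial one $(k,\beta_0,\rho_0)$, where $\beta_0$ and $\rho_0$ send every element to the identity.
   Context: A skew brace is a set $A$ with two group operations $\cdot$ and $\circ$ such that $a\circ(b\cdot c)=(a\circ b)\cdot a^{-1}\cdot(a\circ c)$ for all $a,b,c\in A$; here $a^{-1}$ is the inverse in $(A,\cdot)$. For $a\in A$ let $\lambda^{\mathrm{op}}_a(b)=(a\circ b)\cdot a^{-1}$. A representation of $A$ over $k$ is a triple $(V,\beta,\rho)$ with $V$ a $k$-vector space, $\beta:(A,\cdot)\to\mathrm{GL}(V)$, $\rho:(A,\circ)\to\mathrm{GL}(V)$ group homomorphisms such that $\beta(\lambda^{\mathrm{op}}_a(b))=\rho(a)\beta(b)\rho(a)^{-1}$ for all $a,b\in A$. It is irreducible if $V\ne0$ and the only subspaces invariant under all $\beta(a)$ and $\rho(b)$ are $0$ and $V$. Two representations $(V_1,\beta_1,\rho_1),(V_2,\beta_2,\rho_2)$ are equivalent if there is a linear isomorphism $T:V_1\to V_2$ with $T\beta_1(a)=\beta_2(a)T$ and $T\rho_1(a)=\rho_2(a)T$ for all $a\in A$. *)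

From HB Require Import structures.
From mathcomp Require Import all_boot all_order all_algebra.
Set Implicit Arguments. Unset Strict Implicit. Unset Printing Implicit Defensive.
Import GRing.Theory.
Local Open Scope ring_scope.

Definition is_group (T : Type) (op : T -> T -> T) (e : T) (inv : T -> T) : Prop :=
  [/\ forall x y z, op x (op y z) = op (op x y) z,
      forall x, op e x = x, forall x, op x e = x,
      forall x, op (inv x) x = e & forall x, op x (inv x) = e].

Definition is_skew_brace (A : Type)
    (dot : A -> A -> A) (d1 : A) (dinv : A -> A)
    (circ : A -> A -> A) (c1 : A) (cinv : A -> A) : Prop :=
  [/\ is_group dot d1 dinv, is_group circ c1 cinv &
      forall a b c, circ a (dot b c) = dot (dot (circ a b) (dinv a)) (circ a c)].

Definition lambda_op (A : Type) (dot : A -> A -> A) (dinv : A -> A)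
  (circ : A -> A -> A) (a b : A) : A := dot (circ a b) (dinv a).

Definition is_GL (k : fieldType) (V : lmodType k) (f : V -> V) : Prop :=
  (forall (c : k) (u v : V), f (c *: u + v) = c *: f u + f v) /\ bijective f.

(* (V, beta, rho) is a representation of the skew brace A over k:
   beta : (A,.) -> GL(V) and rho : (A,o) -> GL(V) group homomorphisms with
   beta(lambda^op_a(b)) = rho(a) beta(b) rho(a)^{-1}
   (stated equivalently as beta(lambda^op_a(b)) rho(a) = rho(a) beta(b)). *)
Definition is_rep (A : Type) (dot : A -> A -> A) (dinv : A -> A)
    (circ : A -> A -> A) (k : fieldType) (V : lmodType k)
    (beta rho : A -> V -> V) : Prop :=
  [/\ forall a, is_GL (beta a), forall a, is_GL (rho a),
      forall a b v, beta (dot a b) v = beta a (beta b v),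
      forall a b v, rho (circ a b) v = rho a (rho b v) &
      forall a b v, beta (lambda_op dot dinv circ a b) (rho a v) = rho a (beta b v)].

Definition is_subspace (k : fieldType) (V : lmodType k) (S : V -> Prop) : Prop :=
  S 0 /\ forall (c : k) (u v : V), S u -> S v -> S (c *: u + v).

Definition is_irreducible_rep (A : Type) (dot : A -> A -> A) (dinv : A -> A)
    (circ : A -> A -> A) (k : fieldType) (V : lmodType k)
    (beta rho : A -> V -> V) : Prop :=
  [/\ is_rep dot dinv circ beta rho,
      exists v : V, v <> 0 &
      forall S : V -> Prop, is_subspace S ->
        (forall a v, S v -> S (beta a v)) -> (forall a v, S v -> S (rho a v)) ->
        (forall v, S v -> v = 0) \/ (forall v, S v)].

Definition rep_equiv (A : Type) (k : fieldType) (V1 V2 : lmodType k)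
    (beta1 rho1 : A -> V1 -> V1) (beta2 rho2 : A -> V2 -> V2) : Prop :=
  exists T : V1 -> V2,
    [/\ forall (c : k) (u v : V1), T (c *: u + v) = c *: T u + T v,
        bijective T,
        forall a v, T (beta1 a v) = beta2 a (T v) &
        forall a v, T (rho1 a v) = rho2 a (T v)].

Definition triv_map (A : Type) (k : fieldType) : A -> k^o -> k^o := fun _ v => v.

(* If #|A| = p^n, both (A,.) and (A,o) are p-groups, and a p-group acting linearly on a
   nonzero space in characteristic p fixes a nonzero vector: count fixed points modulo p on
   the finite set of F_p-combinations of an orbit, whose size is divisible by p because
   translation by the base point has order p. Since every lambda^op_a is onto, the
   beta-fixed vectors form a rho-stable subspace, so rho fixes some nonzero beta-fixed w;
   irreducibility forces V = k w, and the coordinate along w is an equivalence with the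
   trivial representation.
   Otherwise let P be a Sylow p-subgroup of (A,o). Its index is invertible in k, so the
   sum-zero functions on the cosets of P form a nonzero module with no nonzero fixed
   vector; a minimal invariant subspace of it, with beta trivial, is an irreducible
   representation that is not the trivial one. *)

From HB Require Import structures.
From mathcomp Require Import all_boot all_order all_algebra all_fingroup all_solvable.
From Stdlib Require Import Classical.
Set Implicit Arguments. Unset Strict Implicit. Unset Printing Implicit Defensive.
Import GRing.Theory.
Local Open Scope ring_scope.

Definition fingroup_of (A : finType) (op : A -> A -> A) (e : A) (inv : A -> A)
  of is_group op e inv : Type := A.

Section IsGroupLaws.
Variables (A : Type) (op : A -> A -> A) (e : A) (inv : A -> A).
Hypothesis hG : is_group op e inv.
Lemma is_group_mulA : associative op. Proof. by case: hG. Qed.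
Lemma is_group_mul1 : left_id e op. Proof. by case: hG. Qed.
Lemma is_group_mulV : left_inverse e inv op. Proof. by case: hG. Qed.
End IsGroupLaws.

HB.instance Definition _ (A : finType) op e inv (hG : @is_group A op e inv) :=
  Finite.on (fingroup_of hG).
HB.instance Definition _ (A : finType) op e inv (hG : @is_group A op e inv) :=
  Finite_isGroup.Build (fingroup_of hG)
    (is_group_mulA hG) (is_group_mul1 hG) (is_group_mulV hG).

Lemma card_fingroup_of (A : finType) op e inv (hG : @is_group A op e inv) :
  #|[set: fingroup_of hG]| = #|A|.
Proof.
rewrite cardsT; apply: (@bij_eq_card _ _ (fun x : fingroup_of hG => x : A)).
by exists (fun x : A => x : fingroup_of hG).
Qed.

Lemma pgroup_setTP (gT : finGroupType) (p : nat) : prime p ->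
  reflect (exists n, #|[set: gT]| = (p ^ n)%N) (p.-group [set: gT])%g.
Proof.
move=> p_pr; rewrite /pgroup.
apply: (iffP idP) => [/p_natP [n cardG] | [n ->]]; first by exists n.
by rewrite pnatX pnat_id.
Qed.

Lemma lambda_op_preimage (A : Type) dot (d1 : A) dinv circ c1 cinv :
  is_group dot d1 dinv -> is_group circ c1 cinv ->
  forall a b, lambda_op dot dinv circ a (circ (cinv a) (dot b a)) = b.
Proof.
move=> [dA _ d1r _ dVr] [cA c1l _ _ cVr] a b.
by rewrite /lambda_op cA cVr c1l -dA dVr d1r.
Qed.

Section LinearFun.
Variables (k : fieldType) (U V : lmodType k) (f : U -> V).
Hypothesis f_linear : linear f.
Let linear_fun_pack : {linear U -> V} :=
  HB.pack f (GRing.isLinear.Build k U V *:%R f f_linear).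

Lemma linear_fun0 : f 0 = 0.
Proof. exact: (linear0 linear_fun_pack). Qed.

Lemma linear_funZ c u : f (c *: u) = c *: f u.
Proof. by have := f_linear c u 0; rewrite addr0 linear_fun0 addr0. Qed.

Lemma linear_fun_sum (I : finType) (F : I -> U) : f (\sum_i F i) = \sum_i f (F i).
Proof. exact: (linear_sum linear_fun_pack). Qed.

End LinearFun.

Lemma act1_id (gT : finGroupType) (V : Type) (f : gT -> V -> V) :
  (forall g h x, f (g * h)%g x = f g (f h x)) -> injective (f 1%g) -> f 1%g =1 id.
Proof. by move=> fM f1_inj x; apply: f1_inj; rewrite -fM mulg1. Qed.

Section Subspace.
Variables (k : fieldType) (V : lmodType k) (S : V -> Prop).
Hypothesis hS : is_subspace S.

Lemma subspace0 : S 0. Proof. by case: hS. Qed.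
Lemma subspaceZ c u : S u -> S (c *: u).
Proof. by case: hS => S0 Slin Su; rewrite -[c *: u]addr0; apply: Slin. Qed.
Lemma subspaceD u v : S u -> S v -> S (u + v).
Proof. by case: hS => _ Slin Su Sv; rewrite -[u]scale1r; apply: Slin. Qed.
Lemma subspace_sum (I : finType) (F : I -> V) : (forall i, S (F i)) -> S (\sum_i F i).
Proof. by move=> SF; apply: (big_ind S subspace0 subspaceD). Qed.

End Subspace.

Lemma subspace_span (k : fieldType) (vT : vectType k) (S : vT -> Prop) (s : seq vT) x :
  is_subspace S -> (forall y, y \in s -> S y) -> x \in <<s>>%VS -> S x.
Proof.
move=> hS Ss xs; rewrite (coord_span (X := in_tuple s) xs); apply: (subspace_sum hS) => i.
by apply/(subspaceZ hS)/Ss/mem_nth.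
Qed.

Lemma exists_minimal_vspace (k : fieldType) (vT : vectType k) (P : {vspace vT} -> Prop) U :
  P U -> exists2 M, P M & forall W, P W -> (W <= M)%VS -> W = M.
Proof.
move: {2}(\dim U) (leqnn (\dim U)) => n; elim: n U => [|n IH] U dimU PU.
  exists U => // W _ WU; apply/eqP; rewrite eqEdim WU.
  by rewrite (leq_trans dimU).
have [[W [PW WU WnU]] | minU] := classic (exists W, [/\ P W, (W <= U)%VS & W != U]).
  apply: (IH W) => //; rewrite -ltnS (leq_trans _ dimU) //.
  by rewrite ltn_neqAle (dimv_leqif_eq WU) WnU (dimv_leqif_eq WU).
exists U => // W PW WU; apply: NNPP => WnU; apply: minU; exists W; split=> //.
exact/eqP.
Qed.

Section PGroupFixedVector.
Variables (gT : finGroupType) (p : nat) (k : fieldType) (V : lmodType k).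
Hypotheses (pchar_p : p \in [pchar k]) (pG : (p.-group [set: gT])%g).
Variable f : gT -> V -> V.
Hypotheses (f_linear : forall g, linear (f g)) (f1 : f 1%g =1 id)
  (fM : forall g h x, f (g * h)%g x = f g (f h x)).
Variables (W : V -> Prop) (v : V).
Hypotheses (hW : is_subspace W) (W_invariant : forall g x, W x -> W (f g x))
  (Wv : W v) (v_neq0 : v != 0).

Let p_prime : prime p := pcharf_prime pchar_p.
Let p_gt1 : (1 < p)%N := prime_gt1 p_prime.
Let natr_modp n : ((n %% p)%N%:R : k) = n%:R := GRing.natr_mod_pchar pchar_p n.

Definition orbit_comb (c : {ffun gT -> 'I_p}) : V := \sum_h (c h : nat)%:R *: f h v.
Definition orbit_combs := codom orbit_comb.

Lemma orbit_combs_sub x : x \in orbit_combs -> W x.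
Proof.
by case/codomP=> c ->; apply: (subspace_sum hW) => h; apply/(subspaceZ hW)/W_invariant.
Qed.

Lemma orbit_combs0 : 0 \in orbit_combs.
Proof.
apply/codomP; exists [ffun _ => Ordinal (ltnW p_gt1)].
by rewrite /orbit_comb big1 // => h _; rewrite ffunE scale0r.
Qed.

Lemma orbit_combs_act g x : x \in orbit_combs -> f g x \in orbit_combs.
Proof.
case/codomP=> c ->; apply/codomP; exists [ffun h => c (g^-1 * h)%g].
rewrite /orbit_comb (linear_fun_sum (f_linear g)) [RHS](reindex_inj (mulgI g)) /=.
by apply: eq_bigr => h _; rewrite ffunE mulKg (linear_funZ (f_linear g)) fM.
Qed.

Lemma orbit_combs_addv x : x \in orbit_combs -> x + v \in orbit_combs.
Proof.
case/codomP=> c ->; apply/codomP.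
exists [ffun h => Ordinal (ltn_pmod ((c h : nat) + (h == 1%g))%N (ltnW p_gt1))].
rewrite /orbit_comb (bigD1 1%g) //= [in RHS](bigD1 1%g) //= ffunE /= eqxx.
rewrite natr_modp natrD scalerDl f1 scale1r addrAC -!addrA; congr (_ + (_ + _)).
by apply: eq_bigr => h /negbTE h_neq1; rewrite ffunE /= h_neq1 addn0 natr_modp.
Qed.

Lemma orbit_combs_addnv x n : x \in orbit_combs -> x + n%:R *: v \in orbit_combs.
Proof.
move=> x_comb; elim: n => [|n IHn]; first by rewrite scale0r addr0.
by rewrite -addn1 natrD scalerDl scale1r addrA orbit_combs_addv.
Qed.

Let combT := seq_sub orbit_combs.

Definition comb_act (x : combT) (g : gT) : combT := insubd x (f g^-1 (val x)).

Lemma comb_act_val x g : val (comb_act x g) = f g^-1 (val x).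
Proof. by rewrite /comb_act val_insubd orbit_combs_act // (valP x). Qed.

Lemma comb_act1 : comb_act^~ 1%g =1 id.
Proof. by move=> x; apply: val_inj; rewrite comb_act_val invg1 f1. Qed.

Lemma comb_actM x : act_morph comb_act x.
Proof. by move=> g h; apply: val_inj; rewrite !comb_act_val invMg fM. Qed.

Definition comb_action := TotalAction comb_act1 comb_actM.

Definition comb_shift (x : combT) (j : 'Z_p) : combT :=
  insubd x (val x + (j : nat)%:R *: v).

Lemma comb_shift_val x j : val (comb_shift x j) = val x + (j : nat)%:R *: v.
Proof. by rewrite /comb_shift val_insubd orbit_combs_addnv // (valP x). Qed.

Lemma comb_shift1 : comb_shift^~ 1%g =1 id.
Proof. by move=> x; apply: val_inj; rewrite comb_shift_val scale0r addr0. Qed.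

Lemma comb_shiftM x : act_morph comb_shift x.
Proof.
move=> i j; apply: val_inj; rewrite !comb_shift_val -addrA -scalerDl -natrD.
have natr_modZp n : ((n %% (Zp_trunc p).+2)%N%:R : k) = n%:R.
  by rewrite Zp_cast ?natr_modp.
by rewrite /= natr_modZp.
Qed.

Definition comb_shift_action := TotalAction comb_shift1 comb_shiftM.

Lemma card_combs_mod : #|[set: combT]| = 0 %[mod p].
Proof.
have pZp : (p.-group [set: 'Z_p])%g.
  by rewrite /pgroup cardsT card_ord Zp_cast // pnat_id.
have acts : [acts [set: 'Z_p], on [set: combT] | comb_shift_action].
  by apply/actsP => j _ x; rewrite !inE.
rewrite (pgroup_fix_mod pZp acts).
suff -> : ('Fix_([set: combT] | comb_shift_action)([set: 'Z_p]))%g = set0.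
  by rewrite cards0.
apply/setP => x; rewrite in_set0; apply/negbTE/negP; rewrite inE =>
  /andP[_ /afixP/(_ (inZp 1) (in_setT _))/(congr1 val)].
rewrite /= comb_shift_val /= modn_small // scale1r => /eqP.
by rewrite -subr_eq0 addrAC subrr add0r (negbTE v_neq0).
Qed.

Lemma pgroup_fixed_vector : exists w, [/\ W w, w != 0 & forall g, f g w = w].
Proof.
have acts : [acts [set: gT], on [set: combT] | comb_action].
  by apply/actsP => g _ x; rewrite !inE.
have := pgroup_fix_mod pG acts; rewrite card_combs_mod.
set F := ('Fix_(_ | _)(_))%g => cardF.
pose x0 : combT := SeqSub orbit_combs0.
have x0F : x0 \in F.
  by rewrite inE in_setT; apply/afixP => g _; apply: val_inj; rewrite comb_act_val linear_fun0.
have /subsetPn[x xF] : ~~ (F \subset [set x0]).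
  apply/negP => /subset_leq_card; rewrite cards1 => cardF_le1.
  have cardF1 : #|F| = 1%N.
    by apply/eqP; rewrite eqn_leq cardF_le1 card_gt0; apply/set0Pn; exists x0.
  by move: cardF; rewrite cardF1 mod0n modn_small.
rewrite inE => x_neq_x0; exists (val x); split.
- exact: orbit_combs_sub (valP x).
- by apply: contra x_neq_x0 => /eqP x0'; apply/eqP/val_inj.
- move=> g; move: xF; rewrite inE => /andP[_ /afixP/(_ g^-1%g (in_setT _))/(congr1 val)].
  by rewrite comb_act_val invgK.
Qed.

End PGroupFixedVector.

Lemma fixed_subspace (k : fieldType) (V : lmodType k) (I : Type) (f : I -> V -> V) :
  (forall i, linear (f i)) -> is_subspace (fun x => forall i, f i x = x).
Proof.
move=> f_linear; split=> [i | c u v fu fv i]; first exact: linear_fun0.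
by rewrite f_linear fu fv.
Qed.

Lemma ppower_rep_fixed_vector (A : finType) dot d1 dinv circ c1 cinv
    (hD : is_group dot d1 dinv) (hC : is_group circ c1 cinv)
    (k : fieldType) (p n : nat) (pchar_p : p \in [pchar k]) (cardA : #|A| = (p ^ n)%N)
    (V : lmodType k) (beta rho : A -> V -> V) (v : V) :
  is_rep dot dinv circ beta rho -> v != 0 ->
  exists w, [/\ w != 0, forall a, beta a w = w & forall a, rho a w = w].
Proof.
move=> [bGL rGL bM rM beta_lambda] v_neq0.
have beta_linear a : linear (beta a) := (bGL a).1.
have rho_linear a : linear (rho a) := (rGL a).1.
have p_prime := pcharf_prime pchar_p.
have pD : (p.-group [set: fingroup_of hD])%g.
  by apply/(pgroup_setTP _ p_prime); exists n; rewrite card_fingroup_of.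
have pC : (p.-group [set: fingroup_of hC])%g.
  by apply/(pgroup_setTP _ p_prime); exists n; rewrite card_fingroup_of.
have beta1 := act1_id (gT := fingroup_of hD) bM (bij_inj (bGL d1).2).
have rho1 := act1_id (gT := fingroup_of hC) rM (bij_inj (rGL c1).2).
have V_subspace : is_subspace (fun _ : V => True) by [].
have [w0 [_ w0_neq0 w0_fixed]] := pgroup_fixed_vector pchar_p pD beta_linear beta1 bM
  V_subspace (fun _ _ _ => I) I v_neq0.
have beta_fixed_rho_invariant a x :
    (forall b, beta b x = x) -> forall b, beta b (rho a x) = rho a x.
  move=> x_fixed b; rewrite -(lambda_op_preimage hD hC a b) beta_lambda.
  by rewrite x_fixed.
have [w [w_fixed w_neq0 w_rho]] := pgroup_fixed_vector pchar_p pC rho_linear rho1 rM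
  (fixed_subspace beta_linear) beta_fixed_rho_invariant w0_fixed w0_neq0.
by exists w.
Qed.

Lemma scalel_inj (k : fieldType) (V : lmodType k) (w : V) :
  w != 0 -> injective (fun c : k => c *: w).
Proof.
move=> w_neq0 c d /eqP; rewrite -subr_eq0 -scalerBl scaler_eq0 (negbTE w_neq0) orbF.
by rewrite subr_eq0 => /eqP.
Qed.

Lemma line_subspace (k : fieldType) (V : lmodType k) (w : V) :
  is_subspace (fun x => exists c : k, x = c *: w).
Proof.
split=> [|c _ _ [a ->] [b ->]]; first by exists 0; rewrite scale0r.
by exists (c * a + b); rewrite scalerDl scalerA.
Qed.

Section LineCoordinate.
Variables (k : fieldType) (V : lmodType k) (w : V).
Hypotheses (w_neq0 : w != 0) (V_line : forall x : V, exists c : k, x = c *: w).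

Let V_lineb x : exists c : k, x == c *: w.
Proof. by have [c ->] := V_line x; exists c. Qed.

Definition line_coord (x : V) : k^o := xchoose (V_lineb x).

Lemma line_coordK x : line_coord x *: w = x.
Proof. exact/esym/eqP/(xchooseP (V_lineb x)). Qed.

Lemma line_coord_linear : linear line_coord.
Proof.
move=> c x y; apply: (scalel_inj w_neq0).
by rewrite /= scalerDl -scalerA !line_coordK.
Qed.

Lemma line_coord_bij : bijective line_coord.
Proof.
exists (fun c : k^o => c *: w) => [x | c]; first exact: line_coordK.
by apply: (scalel_inj w_neq0); rewrite /= line_coordK.
Qed.

End LineCoordinate.

Lemma irreducible_rep_fixed_equiv_triv (A : Type) dot dinv circ (k : fieldType)
    (V : lmodType k) (beta rho : A -> V -> V) (w : V) :
  is_irreducible_rep dot dinv circ beta rho -> w != 0 ->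
  (forall a, beta a w = w) -> (forall a, rho a w = w) ->
  rep_equiv beta rho (@triv_map A k) (@triv_map A k).
Proof.
move=> [[bGL rGL _ _ _] _ irr] w_neq0 w_beta w_rho.
have line_invariant (f : A -> V -> V) : (forall a, linear (f a)) -> (forall a, f a w = w) ->
    forall a x, (exists c, x = c *: w) -> exists c, f a x = c *: w.
  by move=> f_linear fw a _ [c ->]; exists c; rewrite linear_funZ // fw.
have [line0 | V_line] := irr _ (line_subspace w)
  (line_invariant _ (fun a => (bGL a).1) w_beta) (line_invariant _ (fun a => (rGL a).1) w_rho).
  by move: w_neq0; rewrite (line0 w) ?eqxx //; exists 1; rewrite scale1r.
have fixes_all (f : V -> V) : linear f -> f w = w -> forall x, f x = x.
  by move=> f_linear fw x; have [c ->] := V_line x; rewrite linear_funZ // fw.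
exists (line_coord V_line); split.
- exact: line_coord_linear.
- exact: line_coord_bij.
- by move=> a x; rewrite (fixes_all _ (bGL a).1 (w_beta a)).
- by move=> a x; rewrite (fixes_all _ (rGL a).1 (w_rho a)).
Qed.

Lemma triv_map_irreducible (A : Type) dot dinv circ (k : fieldType) :
  is_irreducible_rep dot dinv circ (@triv_map A k) (@triv_map A k).
Proof.
have id_GL : is_GL (fun v : k^o => v) by split=> //; exists id.
split=> //; first by exists (1 : k^o); apply/eqP; rewrite oner_eq0.
move=> S hS _ _.
have [[x [Sx x_neq0]] | S0] := classic (exists x : k^o, S x /\ x <> 0).
  right=> y; have -> : y = (y / x) *: x by rewrite /GRing.scale /= mulfVK //; apply/eqP.
  exact: subspaceZ.
by left=> y Sy; apply: NNPP => y_neq0; apply: S0; exists y.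
Qed.

Definition is_irreducible_group_rep (gT : finGroupType) (k : fieldType) (V : lmodType k)
    (rho : gT -> V -> V) : Prop :=
  [/\ forall a, is_GL (rho a), forall a b v, rho (a * b)%g v = rho a (rho b v),
      exists v : V, v <> 0 &
      forall S : V -> Prop, is_subspace S -> (forall a v, S v -> S (rho a v)) ->
        (forall v, S v -> v = 0) \/ (forall v, S v)].

Section IrreducibleSubrep.
Variables (gT : finGroupType) (k : fieldType) (vT : vectType k) (r : gT -> vT -> vT).
Hypotheses (r_linear : forall a, linear (r a)) (r1 : r 1%g =1 id)
  (rM : forall a b x, r (a * b)%g x = r a (r b x)).
Variable Q : vT -> Prop.
Hypotheses (hQ : is_subspace Q) (Q_invariant : forall a x, Q x -> Q (r a x)).

Definition nonzero_subrep_in (U : {vspace vT}) :=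
  [/\ U != 0%VS, forall a x, x \in U -> r a x \in U & forall x, x \in U -> Q x].

Definition orbit_span x := <<codom (fun a => r a x)>>%VS.

Lemma orbit_span_subrep x : Q x -> x != 0 -> nonzero_subrep_in (orbit_span x).
Proof.
move=> Qx x_neq0; split.
- apply: contraNneq x_neq0 => span0; rewrite -memv0 -span0 -{1}[x]r1.
  exact/memv_span/codom_f.
- move=> a y; apply: (@subspace_span _ _ (fun y => r a y \in orbit_span x))
    => [|_ /codomP[b ->]].
    split=> [|c u v Uu Uv]; first by rewrite linear_fun0 ?mem0v.
    by rewrite r_linear memvD // memvZ.
  by rewrite -rM; apply/memv_span/codom_f.
- move=> y; apply: subspace_span hQ _ => _ /codomP[a ->]; exact: Q_invariant.
Qed.

Section Restriction.
Variable U : {vspace vT}.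
Hypotheses (U_subrep : nonzero_subrep_in U)
  (U_min : forall W, nonzero_subrep_in W -> (W <= U)%VS -> W = U).

Let r_in_U a (u : subvs_of U) : r a (vsval u) \in U.
Proof. by case: U_subrep => _ U_inv _; apply/U_inv/subvsP. Qed.

Definition subvs_act a (u : subvs_of U) : subvs_of U := vsproj U (r a (vsval u)).

Lemma subvs_act_val a u : vsval (subvs_act a u) = r a (vsval u).
Proof. exact: vsprojK. Qed.

Let vsval_inj : injective (@vsval _ _ U) := can_inj (@vsvalK _ _ U).

Lemma subvs_act_irreducible : is_irreducible_group_rep subvs_act.
Proof.
split.
- move=> a; split=> [c u v|].
    by apply: vsval_inj; rewrite !linearP /= !subvs_act_val r_linear.
  by exists (subvs_act a^-1%g) => u; apply: vsval_inj;
    rewrite !subvs_act_val -rM ?mulVg ?mulgV r1.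
- by move=> a b u; apply: vsval_inj; rewrite !subvs_act_val rM.
- case: U_subrep => U_neq0 _ _; exists (vsproj U (vpick U)) => /(congr1 (@vsval _ _ U)).
  by rewrite vsprojK ?memv_pick // linear0; apply/eqP; rewrite vpick0.
move=> S hS S_invariant.
have [[s [Ss s_neq0]] | S0] := classic (exists s, S s /\ s <> 0); last first.
  by left=> u Su; apply: NNPP => u_neq0; apply: S0; exists u.
right=> u.
have vs_neq0 : vsval s != 0.
  by apply/eqP => s0; apply: s_neq0; apply: vsval_inj; rewrite s0 linear0.
have span_sub : (orbit_span (vsval s) <= U)%VS.
  by apply/span_subvP => _ /codomP[a ->]; apply: r_in_U.
have [_ _ U_Q] := U_subrep.
have span_eq := U_min (orbit_span_subrep (U_Q _ (subvsP s)) vs_neq0) span_sub.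
have u_span : vsval u \in orbit_span (vsval s) by rewrite span_eq subvsP.
suff : S (vsproj U (vsval u)) by rewrite vsvalK.
apply: (subspace_span (S := fun y => S (vsproj U y)) _ _ u_span).
- split=> [|c x y Sx Sy]; first by rewrite linear0; apply: (subspace0 hS).
  by rewrite linearP; apply: (subspaceD hS) => //; apply: (subspaceZ hS).
- by move=> _ /codomP[a ->]; apply: S_invariant.
Qed.

Lemma subvs_act_fixed : (forall x, Q x -> (forall a, r a x = x) -> x = 0) ->
  forall u, (forall a, subvs_act a u = u) -> u = 0.
Proof.
move=> Q_fixed u u_fixed; apply: vsval_inj; rewrite linear0.
case: U_subrep => _ _ U_Q; apply: Q_fixed (U_Q _ (subvsP u)) _ => a.
by rewrite -subvs_act_val u_fixed.
Qed.

End Restriction.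

Lemma exists_irreducible_subrep :
    (exists x, Q x /\ x != 0) -> (forall x, Q x -> (forall a, r a x = x) -> x = 0) ->
  exists (V : lmodType k) (rho : gT -> V -> V),
    is_irreducible_group_rep rho /\ forall u, (forall a, rho a u = u) -> u = 0.
Proof.
move=> [x [Qx x_neq0]] Q_fixed.
have [U U_subrep U_min] := exists_minimal_vspace (orbit_span_subrep Qx x_neq0).
exists (subvs_of U), (subvs_act (U := U)); split; first exact: subvs_act_irreducible.
exact: subvs_act_fixed.
Qed.

End IrreducibleSubrep.

Section CosetModule.
Variables (gT : finGroupType) (k : fieldType) (P : {group gT}).

Local Notation coset_fun := {ffun {set gT} -> k^o}.
Definition coset_act (a : gT) (f : coset_fun) : coset_fun := [ffun Y => f (Y :* a)%g].

Let X := rcosets P [set: gT].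

(* Functions on the coset space P\G, extended by zero to all subsets of G. *)
Definition augmentation_kernel (f : coset_fun) : Prop :=
  (forall Y, Y \notin X -> f Y = 0) /\ \sum_(Y in X) f Y = 0.

Lemma coset_act_linear a : linear (coset_act a).
Proof. by move=> c f g; apply/ffunP => Y; rewrite !ffunE. Qed.

Lemma coset_act1 : coset_act 1%g =1 id.
Proof. by move=> f; apply/ffunP => Y; rewrite ffunE rcoset1. Qed.

Lemma coset_actM a b f : coset_act (a * b)%g f = coset_act a (coset_act b f).
Proof. by apply/ffunP => Y; rewrite !ffunE rcosetM. Qed.

Lemma rcosets_rcoset Y a : ((Y :* a)%g \in X) = (Y \in X).
Proof.
apply/rcosetsP/rcosetsP => [[x _ Ya] | [x _ ->]].
  by exists (x * a^-1)%g; rewrite ?inE // rcosetM -Ya -rcosetM mulgV rcoset1.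
by exists (x * a)%g; rewrite ?inE ?rcosetM.
Qed.

Lemma augmentation_kernel_subspace : is_subspace augmentation_kernel.
Proof.
split=> [|c u v [u_out u_sum] [v_out v_sum]].
  by split=> [Y _|]; rewrite ?ffunE // big1 // => Y _; rewrite ffunE.
split=> [Y Y_out|]; first by rewrite !ffunE u_out // v_out // scaler0 addr0.
under eq_bigr do rewrite !ffunE.
by rewrite big_split /= -mulr_sumr u_sum v_sum mulr0 addr0.
Qed.

Lemma augmentation_kernel_invariant a f :
  augmentation_kernel f -> augmentation_kernel (coset_act a f).
Proof.
move=> [f_out f_sum]; split=> [Y Y_out|]; first by rewrite ffunE f_out // rcosets_rcoset.
rewrite -[RHS]f_sum [RHS](reindex_inj (can_inj (rcosetK a))) /=.
by apply: eq_big => [Y | Y _]; rewrite ?rcosets_rcoset ?ffunE.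
Qed.

(* A fixed function is constant on the transitive G-set P\G; the sum of its values is then
   the index times that constant. *)
Lemma augmentation_kernel_fixed f : (#|[set: gT] : P|%g%:R : k) != 0 ->
  augmentation_kernel f -> (forall a, coset_act a f = f) -> f = 0.
Proof.
move=> index_neq0 [f_out f_sum] f_fixed.
have f_const Y : Y \in X -> f Y = f P.
  by case/rcosetsP => a _ ->; rewrite -{2}(f_fixed a) ffunE.
have fP0 : f P = 0.
  move: f_sum; rewrite (eq_bigr _ f_const) sumr_const -mulr_natr => /eqP.
  by rewrite mulf_eq0 (negbTE index_neq0) orbF => /eqP.
apply/ffunP => Y; rewrite ffunE.
by have [/f_const -> | /f_out] := boolP (Y \in X).
Qed.

Lemma augmentation_kernel_neq0 : (1 < #|[set: gT] : P|%g)%N ->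
  exists f, augmentation_kernel f /\ f != 0.
Proof.
case/card_gt1P => Y1 [Y2 [XY1 XY2 Y12]].
pose f : coset_fun := [ffun Y => (Y == Y1)%:R - (Y == Y2)%:R].
have sum_delta Z : Z \in X -> \sum_(Y in X) ((Y == Z)%:R : k) = 1.
  by move=> XZ; rewrite (bigD1 Z) //= eqxx big1 ?addr0 // => Y /andP[_ /negbTE ->].
exists f; split; first split=> [Y XY|].
- rewrite ffunE; case: eqVneq => [YY1 | _]; first by rewrite YY1 XY1 in XY.
  by case: eqVneq => [YY2 | _]; [rewrite YY2 XY2 in XY | rewrite subrr].
- by under eq_bigr do rewrite ffunE; rewrite sumrB !sum_delta // subrr.
apply/eqP => /ffunP/(_ Y1)/eqP; rewrite !ffunE eqxx (negbTE Y12) subr0.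
by rewrite oner_eq0.
Qed.

End CosetModule.

Lemma exists_irreducible_group_rep_without_fixed (gT : finGroupType) (k : fieldType)
    (p : nat) :
    p \in [pchar k] -> ~~ (p.-group [set: gT])%g ->
  exists (V : lmodType k) (rho : gT -> V -> V),
    is_irreducible_group_rep rho /\ forall u, (forall a, rho a u = u) -> u = 0.
Proof.
move=> pchar_p not_pgroup; have [P sylP] := Sylow_exists p [set: gT].
have index_neq0 : (#|[set: gT] : P|%g%:R : k) != 0.
  case/and3P: sylP => _ _; rewrite p'natE ?(pcharf_prime pchar_p) //.
  by rewrite (dvdn_pcharf pchar_p).
have index_gt1 : (1 < #|[set: gT] : P|%g)%N.
  rewrite ltn_neqAle indexg_gt0 andbT eq_sym; apply: contra not_pgroup => /eqP index1.
  by rewrite -(index1g (subsetT P) index1) (pHall_pgroup sylP).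
have [f [f_ker f_neq0]] := augmentation_kernel_neq0 k index_gt1.
apply: (exists_irreducible_subrep (@coset_act_linear gT k) (@coset_act1 gT k)
  (@coset_actM gT k) (@augmentation_kernel_subspace _ k P)
  (@augmentation_kernel_invariant _ k P)); first by exists f.
by move=> x; apply: augmentation_kernel_fixed index_neq0.
Qed.

Lemma irreducible_group_rep_triv_beta (A : finType) (dot : A -> A -> A) (dinv : A -> A)
    circ c1 cinv (hC : is_group circ c1 cinv) (k : fieldType) (V : lmodType k)
    (rho : fingroup_of hC -> V -> V) :
  is_irreducible_group_rep rho -> is_irreducible_rep dot dinv circ (fun _ v => v) rho.
Proof.
move=> [rho_GL rho_mul V_neq0 irr]; split=> //; last by move=> S hS _; apply: irr.
by split=> //; split=> //; exists id.
Qed.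

Lemma rep_equiv_triv_fixed (A : Type) (k : fieldType) (V : lmodType k) (beta rho : A -> V -> V) :
  rep_equiv beta rho (@triv_map A k) (@triv_map A k) -> forall a v, rho a v = v.
Proof. by case=> T [_ [T' TK _] _ T_rho] a v; apply: (can_inj TK); rewrite T_rho. Qed.

Unset Implicit Arguments.

Theorem theorem3p6 (A : finType)
    (dot : A -> A -> A) (d1 : A) (dinv : A -> A)
    (circ : A -> A -> A) (c1 : A) (cinv : A -> A)
    (hA : is_skew_brace dot d1 dinv circ c1 cinv)
    (k : fieldType) (p : nat) (hp : p \in [pchar k]) :
  (exists n : nat, #|A| = (p ^ n)%N) <->
  (is_irreducible_rep dot dinv circ (@triv_map A k) (@triv_map A k) /\
   forall (V : lmodType k) (beta rho : A -> V -> V),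
     is_irreducible_rep dot dinv circ beta rho ->
     rep_equiv beta rho (@triv_map A k) (@triv_map A k)).
Proof.
have [hD hC _] := hA.
split=> [[n cardA] | [_ triv_only]].
  split=> [|V beta rho V_irr]; first exact: triv_map_irreducible.
  have [V_rep [v /eqP v_neq0] _] := V_irr.
  have [w [w_neq0 w_beta w_rho]] := ppower_rep_fixed_vector hD hC hp cardA V_rep v_neq0.
  exact: irreducible_rep_fixed_equiv_triv V_irr w_neq0 w_beta w_rho.
have /(pgroup_setTP _ (pcharf_prime hp))[n] : (p.-group [set: fingroup_of hC])%g.
  apply: contraT => /(exists_irreducible_group_rep_without_fixed hp).
  case=> V [rho [rho_irr no_fixed]].
  have [_ _ [v v_neq0] _] := rho_irr.
  have rho_triv := triv_only V _ rho (irreducible_group_rep_triv_beta dot dinv rho_irr).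
  by case: v_neq0; apply: no_fixed => a; apply: rep_equiv_triv_fixed rho_triv a v.
by rewrite card_fingroup_of; exists n.
Qed.
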